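(* There are infinitely many (pairwise non-isomorphic) finite simple graphs $G$ such that $G$ is 2-connected, cubic, and bipartite, $v(G) \equiv 0 \pmod 6$, and $G$ has no $\Lambda$-factor.
   Context: Graphs are finite, undirected, without loops or multiple edges; $v(G)=|V(G)|$. $\Lambda$ denotes the path on 3 vertices. A $\Lambda$-factor of $G$ is a spanning subgraph of $G$ each of whose connected components is a 3-vertex path. *)

From mathcomp Require Import all_boot.
Set Implicit Arguments. Unset Strict Implicit. Unset Printing Implicit Defensive.

Definition simple_graph (T : finType) (e : rel T) : Prop :=
  symmetric e /\ irreflexive e.

Definition nbhd (T : finType) (e : rel T) (x : T) : {set T} := [set y | e x y].
Definition cubic (T : finType) (e : rel T) : Prop :=
  forall x : T, #|nbhd e x| = 3.

Definition bipartite (T : finType) (e : rel T) : Prop :=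
  exists A : {set T}, forall x y, e x y -> (x \in A) != (y \in A).

Definition connected (T : finType) (e : rel T) : Prop :=
  forall x y : T, connect e x y.

Definition connected_minus (T : finType) (e : rel T) (v : T) : Prop :=
  forall x y : T, x != v -> y != v ->
    connect [rel a b | e a b && (a != v) && (b != v)] x y.

Definition two_connected (T : finType) (e : rel T) : Prop :=
  2 < #|T| /\ connected e /\ forall v : T, connected_minus e v.

(* A Lambda-factor: a spanning subgraph F of G (same vertex set, F ⊆ E(G),
   F symmetric) every connected component of which is a path on 3 vertices. *)
Definition component (T : finType) (F : rel T) (x : T) : {set T} :=
  [set y | connect F x y].

Definition is_P3 (T : finType) (F : rel T) (C : {set T}) : Prop :=
  exists a b c : T, [/\ uniq [:: a; b; c], C = [set a; b; c],
                        F a b, F b c & ~~ F a c].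

Definition Lambda_factor (T : finType) (e : rel T) (F : rel T) : Prop :=
  [/\ symmetric F, subrel F e & forall x : T, is_P3 F (component F x)].

Definition has_Lambda_factor (T : finType) (e : rel T) : Prop :=
  exists F : rel T, Lambda_factor e F.

Definition isomorphic (T1 T2 : finType) (e1 : rel T1) (e2 : rel T2) : Prop :=
  exists f : T1 -> T2, bijective f /\ forall x y, e2 (f x) (f y) = e1 x y.

From mathcomp Require Import all_boot zify.

Set Implicit Arguments.
Unset Strict Implicit.
Unset Printing Implicit Defensive.

(* A gadget is K_{3,3} with one edge subdivided twice, attached to the rest of a graph by one
   edge at each of its two subdivision vertices (its ports).  A Λ-factor F gives every vertex
   an F-degree in {1, 2}, and F-adjacent vertices have degrees summing to 3.  Since the gadget
   has 8 = 2 (mod 3) vertices, F must use one of its two attaching edges; if it uses only one,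
   the port at that edge has F-degree 2, and if it uses both, both ports have F-degree 1
   (checked by exhausting the 2^13 choices of F on the gadget).  Consequently two gadgets hung
   in parallel between two vertices x and y forbid the third edges at x and y, and a gadget
   whose two attaching edges are both forbidden in this way is impossible.  The base graph
   below, on 60 vertices, contains this configuration and has exactly two vertices of
   degree 2; closing k+1 copies of it into a ring through these two vertices gives cubic,
   bipartite, 2-connected graphs of order 60(k+1) without Λ-factor. *)

Definition del_vertex (T : finType) (e : rel T) (z : T) : rel T :=
  [rel a b | e a b && (a != z) && (b != z)].

Lemma del_vertex_sym (T : finType) (e : rel T) z : symmetric e -> symmetric (del_vertex e z).
Proof. by move=> e_sym a b; rewrite /del_vertex /= e_sym andbAC. Qed.

Lemma connect_homo (T T' : finType) (e : rel T) (e' : rel T') (f : T -> T') :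
  {homo f : x y / e x y >-> e' x y} -> {homo f : x y / connect e x y >-> connect e' x y}.
Proof.
move=> fe x _ /connectP[p ep ->]; elim: p x ep => [|y p IHp] x /=; first by rewrite connect0.
by case/andP=> /fe/connect1 exy /IHp; apply: connect_trans.
Qed.

Lemma connected_minus_connected (T : finType) (e : rel T) :
  2 < #|T| -> (forall w, connected_minus e w) -> connected e.
Proof.
move=> T_gt2 minus x y.
case: (pickP [pred w | w \notin [set x; y]]) => [w | all_in]; last first.
  have: #|T| <= #|[set x; y]|.
    by apply/subset_leq_card/subsetP => w _; apply/negbFE/all_in.
  by rewrite cards2; lia.
rewrite /= !inE negb_or => /andP[wx wy].
apply: connect_sub (minus w x y _ _); rewrite 1?eq_sym //.
by move=> a b /andP[/andP[eab _] _]; apply: connect1.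
Qed.

Lemma card_nbhd_count (T : finType) (F : rel T) x (s : seq T) :
  uniq s -> (forall y, F x y -> y \in s) -> #|nbhd F x| = count (F x) s.
Proof.
move=> s_uniq Fs; rewrite -size_filter -(card_uniqP (filter_uniq _ s_uniq)).
apply: eq_card => y; rewrite inE mem_filter.
by apply/idP/andP => [Fxy | []//]; split; last exact: Fs.
Qed.

Fixpoint bfs (T : eqType) (nb : T -> seq T) (fuel : nat) (seen front : seq T) : seq T :=
  if fuel is n.+1 then
    let new := [seq y <- undup (flatten (map nb front)) | y \notin seen] in
    if new is [::] then seen else bfs nb n (seen ++ new) new
  else seen.

Lemma bfs_connect (T : finType) (e : rel T) (nb : T -> seq T) r fuel seen front :
  (forall x y, y \in nb x -> e x y) ->
  (forall x, x \in seen -> connect e r x) -> (forall x, x \in front -> connect e r x) ->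
  forall x, x \in bfs nb fuel seen front -> connect e r x.
Proof.
move=> nbe; elim: fuel seen front => [|n IHn] seen front //= seen_r front_r.
have new_r y : y \in [seq y <- undup (flatten (map nb front)) | y \notin seen] -> connect e r y.
  rewrite mem_filter mem_undup => /andP[_ /flatten_mapP[x /front_r rx /nbe exy]].
  exact: connect_trans rx (connect1 exy).
case: [seq _ <- _ | _] new_r => [|y new] // new_r.
by apply: IHn => // z; rewrite mem_cat => /orP[/seen_r|/new_r].
Qed.

Lemma connect_broken_ring (T : finType) (g : rel T) m (r : 'I_m.+1 -> T) (b : 'I_m.+1) :
  connect_sym g -> (forall i, i != b -> connect g (r i) (r (ordS i))) ->
  forall i j, connect g (r i) (r j).
Proof.
move=> g_sym link.
have valS (i : 'I_m.+1) : i < m -> val (ordS i) = i.+1 by move=> ?; rewrite /= modn_small.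
have up n (i : 'I_m.+1) : i + n = b -> connect g (r i) (r b).
  elim: n i => [|n IHn] i ib; first by rewrite addn0 in ib; rewrite (val_inj ib) connect0.
  have ilt : i < m by have := ltn_ord b; lia.
  apply: connect_trans (link i _) (IHn _ _); first by apply/eqP => ie; move: ib; rewrite ie; lia.
  by rewrite valS //; lia.
have down n (i : 'I_m.+1) : i + n = m -> b < i -> connect g (r i) (r ord0).
  elim: n i => [|n IHn] i im bi.
    have -> : ord0 = ordS i by apply: val_inj; rewrite /= (_ : i.+1 = m.+1) ?modnn //; lia.
    by apply: link; apply/eqP => ie; move: bi; rewrite ie ltnn.
  apply: connect_trans (link i _) (IHn _ _ _); first by apply/eqP => ie; move: bi; rewrite ie ltnn.
    by rewrite valS //; lia.
  by rewrite valS //; lia.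
have to_b i : connect g (r i) (r b).
  case: (leqP i b) => ib; first by apply: (up (b - i)); lia.
  apply: connect_trans (down (m - i) i _ ib) (up b ord0 _) => //; have := ltn_ord i; lia.
by move=> i j; apply: connect_trans (to_b i) _; rewrite g_sym.
Qed.

(** * Degrees in a Λ-factor *)

Definition lambda_degrees (T : finType) (F : rel T) (S : {pred T}) : Prop :=
  forall x, x \in S -> ((#|nbhd F x| == 1) || (#|nbhd F x| == 2)) /\
    forall y, y \in S -> F x y -> #|nbhd F x| + #|nbhd F y| = 3.

Lemma P3_nbhd (T : finType) (F : rel T) (C : {set T}) a b c :
  symmetric F -> irreflexive F -> uniq [:: a; b; c] -> C = [set a; b; c] ->
  F a b -> F b c -> ~~ F a c -> (forall y z, y \in C -> F y z -> z \in C) ->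
  forall y, y \in C -> nbhd F y = if y == b then [set a; c] else [set b].
Proof.
move=> Fsym Firr abc CE Fab Fbc nFac closed y yC.
move: abc; rewrite /= !inE !negb_or => /and3P[/andP[ab _] bc _].
have ba : b != a by rewrite eq_sym.
have cb : c != b by rewrite eq_sym.
have Fba : F b a by rewrite Fsym.
have Fcb : F c b by rewrite Fsym.
have nFca : F c a = false by rewrite Fsym; apply/negbTE.
apply/setP => z; rewrite !inE; have := closed y z yC; move: yC; rewrite CE !inE -!orbA.
case/or3P => /eqP-> Fz; rewrite ?eqxx ?(negbTE ab) ?(negbTE cb) !inE;
  apply/idP/idP => [/[dup] /Fz /or3P[] /eqP-> | ];
  rewrite ?eqxx ?Firr ?Fab ?Fbc ?Fba ?Fcb ?(negbTE nFac) ?nFca ?(negbTE ab) ?(negbTE ba)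
    ?(negbTE bc) ?(negbTE cb) ?orbT //.
all: by [move/eqP-> | case/orP => /eqP->].
Qed.

Lemma Lambda_factor_degrees (T : finType) (e F : rel T) :
  irreflexive e -> Lambda_factor e F -> lambda_degrees F predT.
Proof.
move=> e_irr [Fsym Fe FP3] x _.
have Firr : irreflexive F by move=> y; apply/negbTE/negP => /Fe; rewrite e_irr.
have [a [b [c [abc CE Fab Fbc nFac]]]] := FP3 x.
have [ab ac bc] : [/\ a != b, a != c & b != c].
  by move: abc; rewrite /= !inE !negb_or => /and3P[/andP[-> ->] -> _].
have closed y z : y \in component F x -> F y z -> z \in component F x.
  by rewrite !inE => xy /connect1; apply: connect_trans.
have xC : x \in component F x by rewrite inE connect0.
have nbhdE := P3_nbhd Fsym Firr abc CE Fab Fbc nFac closed.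
have deg y : y \in component F x -> #|nbhd F y| = if y == b then 2 else 1.
  by move=> yC; rewrite nbhdE //; case: (y == b); rewrite ?cards2 ?ac ?cards1.
split=> [|y _ Fxy]; first by rewrite deg //; case: (x == b).
have yC := closed x y xC Fxy.
have : y \in nbhd F x by rewrite inE.
rewrite !deg // nbhdE //.
case: (x == b); case: (y =P b) => [->|/eqP/negbTE yb]; rewrite !inE ?yb //.
by rewrite eq_sym (negbTE ab) (negbTE bc).
Qed.

(** * Rings of copies of a graph *)

Section Necklace.

Variables (T : finType) (e : rel T) (u v : T) (n : nat).

Definition necklace : rel ('I_n.+1 * T) := fun p q =>
  [|| (p.1 == q.1) && e p.2 q.2,
      [&& p.2 == v, q.2 == u & q.1 == ordS p.1]
    | [&& p.2 == u, q.2 == v & p.1 == ordS q.1]].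

Hypotheses (e_sym : symmetric e) (e_irr : irreflexive e) (uv : u != v) (e_uv : ~~ e u v).

Lemma necklace_sym : symmetric necklace.
Proof.
move=> [i x] [j y]; rewrite /necklace /= (eq_sym i j) e_sym.
by congr (_ || _); rewrite orbC; congr (_ || _); rewrite andbCA.
Qed.

Lemma necklace_irr : irreflexive necklace.
Proof.
move=> [i x]; rewrite /necklace /= e_irr andbF /=.
by case: (x =P v) => [->|_]; rewrite ?[v == u]eq_sym ?(negbTE uv) ?andbF.
Qed.

Lemma necklace_nbhd i x : nbhd necklace (i, x) =
  [set (i, y) | y in nbhd e x] :|: (if x == v then [set (ordS i, u)] else set0)
                               :|: (if x == u then [set (ord_pred i, v)] else set0).
Proof.
apply/setP => -[j y]; rewrite /nbhd !inE /necklace /=.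
have -> : ((j, y) \in [set (i, y) | y in [set y | e x y]]) = (i == j) && e x y.
  apply/imsetP/andP => [[y' ey' [-> ->]] | [/eqP-> exy]]; last by exists y; rewrite ?inE.
  by rewrite eqxx -(in_set (e x)).
case: (x == v); case: (x == u); rewrite ?inE ?xpair_eqE //=;
  by rewrite ?[i == ordS j]eq_sym ?(can2_eq (@ordSK _) (@ord_predK _))
    ?[(y == u) && _]andbC ?[(y == v) && _]andbC ?orbF -?orbA.
Qed.

Lemma necklace_nbhd_inner i x : x != u -> x != v ->
  nbhd necklace (i, x) = [set (i, y) | y in nbhd e x].
Proof. by move=> /negbTE xu /negbTE xv; rewrite necklace_nbhd xu xv !setU0. Qed.

Lemma necklace_cubic : (forall x, #|nbhd e x| + (x == u) + (x == v) = 3) -> cubic necklace.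
Proof.
move=> deg [i x]; have := deg x.
have cardA y : #|[set (i, z) | z in nbhd e y]| = #|nbhd e y| by apply: card_imset => ? ? [].
have notA y z j : ~~ e y z -> (j, z) \notin [set (i, w) | w in nbhd e y].
  by move=> /negP nyz; apply/imsetP => -[w]; rewrite inE => eyw [_ zw]; apply: nyz; rewrite zw.
have e_vu : ~~ e v u by rewrite e_sym.
rewrite necklace_nbhd; case: (x =P u) => [xu|/eqP/negbTE xu]; case: (x =P v) => [xv|/eqP/negbTE xv].
- by move: uv; rewrite -xu xv eqxx.
- by rewrite xu setU0 setUC cardsU1 notA // cardA /=; lia.
- by rewrite xv setU0 setUC cardsU1 notA // cardA /=; lia.
- by rewrite !setU0 cardA /=; lia.
Qed.

Lemma necklace_bipartite (A : {set T}) :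
  (forall x y, e x y -> (x \in A) != (y \in A)) -> (u \in A) != (v \in A) ->
  bipartite necklace.
Proof.
move=> A_col uvA; exists [set p | p.2 \in A] => -[i x] [j y]; rewrite /necklace !inE /=.
by case/or3P=> [/andP[_ /A_col] | /and3P[/eqP-> /eqP-> _] | /and3P[/eqP-> /eqP-> _]];
  rewrite // eq_sym.
Qed.

(* The ring edges leave copy 0 only at u and v, so away from them a Λ-factor of the ring
   restricts to copy 0. *)
Lemma necklace_no_Lambda_factor :
  (forall F, symmetric F -> subrel F e -> ~ lambda_degrees F [pred x | (x != u) && (x != v)]) ->
  ~ has_Lambda_factor necklace.
Proof.
move=> no_local [F LF]; have [F_sym F_sub _] := LF.
have F_deg := Lambda_factor_degrees necklace_irr LF.
pose F0 x y := F (ord0, x) (ord0, y) && e x y.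
apply: (no_local F0); [by move=> x y; rewrite /F0 F_sym e_sym | by move=> x y /andP[] |].
have nbhd0 x : (x != u) && (x != v) ->
    nbhd F (ord0, x) = [set (ord0, y) | y in nbhd F0 x].
  move=> /andP[xu xv]; apply/setP => -[i y]; rewrite inE.
  apply/idP/imsetP => [Fxy | [y']]; last by rewrite inE => /andP[Fxy _] [-> ->].
  have : (i, y) \in nbhd necklace (ord0, x) by rewrite inE F_sub.
  rewrite necklace_nbhd_inner // => /imsetP[y' exy' [ei ey]]; rewrite ei ey in Fxy *.
  by exists y' => //; move: exy'; rewrite !inE /F0 Fxy.
have deg0 x : (x != u) && (x != v) -> #|nbhd F (ord0, x)| = #|nbhd F0 x|.
  by move=> xS; rewrite nbhd0 // card_imset // => ? ? [].
move=> x xS; have [deg12 deg3] := F_deg (ord0, x) isT.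
split=> [|y yS /andP[Fxy _]]; first by rewrite -deg0.
by rewrite -!deg0 //; apply: deg3.
Qed.

Hypothesis e_conn : connected e.
Hypothesis e_reach_port : forall z x, x != z ->
  (z != u /\ connect (del_vertex e z) x u) \/ (z != v /\ connect (del_vertex e z) x v).

(* Removing (j, z) breaks at most the ring link leaving copy b; each copy keeps a
   representative r i joined to the next one, and every vertex reaches some r i. *)
Lemma necklace_connected_minus w : connected_minus necklace w.
Proof.
case: w => j z p q pw qw; pose G := del_vertex necklace (j, z).
have G_sym : connect_sym G by apply/sym_connect_sym/del_vertex_sym/necklace_sym.
have copy i x y : i != j -> connect G (i, x) (i, y).
  move=> ij; apply: (connect_homo (f := pair i)) (e_conn x y) => a b eab.
  by rewrite /G /del_vertex /= /necklace /= eqxx eab !xpair_eqE (negbTE ij).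
have copy_j x y : connect (del_vertex e z) x y -> connect G (j, x) (j, y).
  apply: connect_homo => a b /andP[/andP[eab az] bz].
  by rewrite /G /del_vertex /= /necklace /= eqxx eab !xpair_eqE eqxx az bz.
have link i : (i, v) != (j, z) -> (ordS i, u) != (j, z) -> G (i, v) (ordS i, u).
  by move=> iv Siu; rewrite /G /del_vertex /= iv Siu /necklace /= !eqxx orbT.
pose r i := (i, if (i == j) && (z == u) then v else u).
have ring i k : connect G (r i) (r k).
  apply: (connect_broken_ring (b := if z == u then ord_pred j else j)) G_sym _ i k => {}i ib.
  have Sij : (ordS i == j) && (z == u) = false.
    by apply/andP => -[/eqP Sij /eqP zu]; move: ib; rewrite zu eqxx -Sij ordSK eqxx.
  have Siu : (ordS i, u) != (j, z) by apply: contraFneq Sij => -[-> ->]; rewrite !eqxx.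
  have iv : (i, v) != (j, z).
    by apply/eqP => -[ij vz]; move: ib; rewrite ij -vz [v == u]eq_sym (negbTE uv) eqxx.
  have ri : connect G (r i) (i, v).
    rewrite /r; case: (i =P j) => [ij|/eqP ij] /=; last exact: copy.
    by case: (z =P u) => [_|/eqP/negbTE zu]; [exact: connect0 | rewrite ij zu eqxx in ib].
  by rewrite {2}/r Sij; apply: connect_trans ri (connect1 (link i iv Siu)).
have to_r (i : 'I_n.+1) x : (i, x) != (j, z) -> exists k, connect G (i, x) (r k).
  case: (i =P j) => [->|/eqP ij] jx; last by exists i; rewrite /r (negbTE ij) /= copy.
  have xz : x != z by apply: contraNneq jx => ->.
  case: (e_reach_port xz) => [[zu xu] | [zv xv]].
    by exists j; rewrite /r (negbTE zu) andbF; apply: copy_j.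
  case: (z =P u) => [zu | /eqP zu]; first by exists j; rewrite /r zu !eqxx; apply: copy_j.
  exists (ordS j); rewrite /r (negbTE zu) andbF; apply: connect_trans (copy_j _ _ xv) _.
  by apply/connect1/link; rewrite xpair_eqE negb_and ?[v == z]eq_sym ?[u == z]eq_sym ?zv ?zu orbT.
case: p q pw qw => [i x] [k y] /to_r[i' xi'] /to_r[k' yk'].
by apply: connect_trans xi' (connect_trans (ring i' k') _); rewrite G_sym.
Qed.

Lemma necklace_two_connected : 2 < #|T| -> two_connected necklace.
Proof.
move=> T_gt2; have minus := necklace_connected_minus.
have card_gt2 : 2 < #|{: 'I_n.+1 * T}| by rewrite card_prod card_ord (leq_trans T_gt2) ?leq_pmull.
by split; [|split; [apply: connected_minus_connected|]].
Qed.

End Necklace.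

Arguments necklace {T} e u v n.

(** * The gadget *)

(* [inord] with the reduction modulo [n.+1] built in; unlike [inord], it computes under
   [vm_compute]. *)
Definition ord_mod n (i : nat) : 'I_n.+1 := Ordinal (ltn_pmod i (ltn0Sn n)).

Lemma ord_modK n i : i <= n -> val (ord_mod n i) = i.
Proof. by move=> i_le; rewrite /= modn_small. Qed.

Definition ord_seq n : seq 'I_n.+1 := [seq ord_mod n i | i <- iota 0 n.+1].

Lemma mem_ord_seq n (i : 'I_n.+1) : i \in ord_seq n.
Proof.
apply/mapP; exists (val i); first by rewrite mem_iota ltn_ord.
by apply: val_inj; rewrite /= modn_small.
Qed.

(* K_{3,3} on {0, 1, 2} x {3, 4, 5} with the edge 0-3 replaced by the path 0-6-7-3. *)
Definition gadget_arcs : seq ('I_8 * 'I_8) :=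
  [seq (ord_mod 7 p.1, ord_mod 7 p.2) | p <- [:: (0, 4); (0, 5); (1, 3); (1, 4); (1, 5);
                                               (2, 3); (2, 4); (2, 5); (0, 6); (6, 7); (7, 3)]].
Definition port_s : 'I_8 := ord_mod 7 6.
Definition port_t : 'I_8 := ord_mod 7 7.

Definition incident (a : 'I_8) (p : 'I_8 * 'I_8) : bool := (val p.1 == val a) || (val p.2 == val a).
Definition other_end (a : 'I_8) (p : 'I_8 * 'I_8) : 'I_8 := if p.1 == a then p.2 else p.1.
Definition gadget_nbrs (a : 'I_8) : seq 'I_8 :=
  [seq other_end a p | p <- gadget_arcs & incident a p].

(* F-degrees in the gadget, for F given on its edges by [f] and on the edges attached at
   [port_s] and [port_t] by [es] and [et]. *)
Definition gadget_deg (f : rel 'I_8) (es et : bool) (a : 'I_8) : nat :=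
  count (f a) (gadget_nbrs a) + (a == port_s) && es + (a == port_t) && et.
Definition arcs_deg (arcs : seq ('I_8 * 'I_8)) (es et : bool) (a : 'I_8) : nat :=
  count (incident a) arcs + (a == port_s) && es + (a == port_t) && et.

Lemma gadget_degE (f : rel 'I_8) es et a : symmetric f ->
  gadget_deg f es et a = arcs_deg [seq p <- gadget_arcs | f p.1 p.2] es et a.
Proof.
move=> f_sym; congr (_ + _ + _); rewrite count_map count_filter count_filter.
apply: eq_count => -[x y]; rewrite /incident /other_end /= !val_eqE.
by case: (x =P a) => [->|_]; case: (y =P a) => [->|_]; rewrite ?eqxx ?andbF ?andbT // f_sym.
Qed.

Definition gadget_check (arcs : seq ('I_8 * 'I_8)) (es et : bool) : bool :=
  let d := arcs_deg arcs es et in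
  [&& all (fun a => (d a == 1) || (d a == 2)) (ord_seq 7)
    & all (fun p => d p.1 + d p.2 == 3) arcs] ==>
  [&& es || et, es ==> (d port_s == 2 - et) & et ==> (d port_t == 2 - es)].

Fixpoint bitseqs n : seq bitseq :=
  if n is n'.+1 then [seq b :: m | b <- [:: false; true], m <- bitseqs n'] else [:: [::]].

Lemma mem_bitseqs (m : bitseq) : m \in bitseqs (size m).
Proof. by elim: m => [|b m IHm] //; apply: (allpairs_f (fun b m => b :: m)) => //; case: b. Qed.

Lemma gadget_check_all :
  all (fun m => all (fun es => all (gadget_check (mask m gadget_arcs) es) [:: false; true])
                    [:: false; true])
      (bitseqs (size gadget_arcs)).
Proof. by vm_compute. Qed.

Lemma gadget_port_degrees (f : rel 'I_8) (es et : bool) : symmetric f ->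
  let d := gadget_deg f es et in
  (forall a, (d a == 1) || (d a == 2)) -> (forall a b, f a b -> d a + d b = 3) ->
  [/\ es || et, es -> d port_s = 2 - et & et -> d port_t = 2 - es].
Proof.
move=> f_sym d d12 d3; pose m := [seq f p.1 p.2 | p <- gadget_arcs].
have bools (b : bool) : b \in [:: false; true] by case: b.
have := allP gadget_check_all m; rewrite -(size_map (fun p => f p.1 p.2)) mem_bitseqs.
move=> /(_ isT) /allP /(_ es (bools es)) /allP /(_ et (bools et)).
rewrite -filter_mask /gadget_check; set d' := arcs_deg _ es et => /implyP check.
have dE a : d a = d' a by rewrite /d gadget_degE.
have d'12 : all (fun a => (d' a == 1) || (d' a == 2)) (ord_seq 7).
  by apply/allP => a _; rewrite -dE.
have d'3 : all (fun p => d' p.1 + d' p.2 == 3) [seq p <- gadget_arcs | f p.1 p.2].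
  by apply/allP => p; rewrite mem_filter => /andP[fp _]; rewrite -!dE d3.
move: check; rewrite d'12 d'3 => /(_ isT) /and3P[used /implyP s_deg /implyP t_deg].
by split=> // [/s_deg | /t_deg]; rewrite dE => /eqP.
Qed.

(** * The base graph *)

(* Seven gadgets G_0, ..., G_6 and four connectors c_0, ..., c_3: connector c_(2m) is joined
   to the s-ports of G_(3m), G_(3m+1), G_(3m+2) and connector c_(2m+1) to the t-ports of
   G_(3m+1), G_(3m+2), G_(3m+3).  The t-port of G_0 and the s-port of G_6 stay free. *)
Definition base : finType := Finite.clone ('I_7 * 'I_8 + 'I_4)%type _.

Definition gadget_vertex (j : nat) (a : 'I_8) : base := inl (ord_mod 6 j, a).
Definition connector (c : nat) : base := inr (ord_mod 3 c).

Definition s_connector (j : nat) : seq nat := if j < 6 then [:: 2 * (j %/ 3)] else [::].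
Definition t_connector (j : nat) : seq nat := if 0 < j then [:: 2 * ((j - 1) %/ 3) + 1] else [::].
Definition port_connectors (j : 'I_7) (a : 'I_8) : seq nat :=
  if a == port_s then s_connector j else if a == port_t then t_connector j else [::].
Definition first_gadget (c : nat) : nat := 3 * (c %/ 2) + c %% 2.
Definition connector_port (c : nat) : 'I_8 := if c %% 2 == 0 then port_s else port_t.

Definition base_nbrs (x : base) : seq base :=
  match x with
  | inl (j, a) =>
      [seq inl (j, b) | b <- gadget_nbrs a] ++ [seq connector c | c <- port_connectors j a]
  | inr c => let g := first_gadget c in
             [seq gadget_vertex i (connector_port c) | i <- [:: g; g + 1; g + 2]]
  end.

Definition base_edge : rel base := fun x y => y \in base_nbrs x.

Definition base_u : base := gadget_vertex 0 port_t.
Definition base_v : base := gadget_vertex 6 port_s.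

Lemma first_gadget_even m : first_gadget (2 * m) = 3 * m.
Proof. by rewrite /first_gadget; lia. Qed.

Lemma first_gadget_odd m : first_gadget (2 * m + 1) = 3 * m + 1.
Proof. by rewrite /first_gadget; lia. Qed.

Lemma connector_port_even m : connector_port (2 * m) = port_s.
Proof. by rewrite /connector_port (_ : 2 * m %% 2 = 0) //; lia. Qed.

Lemma connector_port_odd m : connector_port (2 * m + 1) = port_t.
Proof. by rewrite /connector_port (_ : (2 * m + 1) %% 2 = 1) //; lia. Qed.

Definition base_enum : seq base :=
  [seq inl ja | ja <- [seq (j, a) | j <- ord_seq 6, a <- ord_seq 7]] ++
  [seq inr c | c <- ord_seq 3].

Lemma mem_base_enum x : x \in base_enum.
Proof.
rewrite mem_cat.
case: x => [[j a]|c]; apply/orP; [left | right]; apply: map_f; last exact: mem_ord_seq.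
exact: (allpairs_f pair (mem_ord_seq j) (mem_ord_seq a)).
Qed.

Lemma base_enum_all (P : pred base) : all P base_enum -> forall x, P x.
Proof. by move=> /allP P_all x; apply/P_all/mem_base_enum. Qed.

Lemma base_nbrs_check :
  all (fun x => [&& uniq (base_nbrs x), x \notin base_nbrs x,
                    size (base_nbrs x) + (x == base_u) + (x == base_v) == 3
                  & all (fun y => x \in base_nbrs y) (base_nbrs x)]) base_enum.
Proof. by vm_compute. Qed.

Lemma base_edge_sym : symmetric base_edge.
Proof.
have nbrs_sym x y : base_edge x y -> base_edge y x.
  by have /and4P[_ _ _ /allP] := base_enum_all base_nbrs_check x; apply.
by move=> x y; apply/idP/idP; apply: nbrs_sym.
Qed.

Lemma base_edge_irr : irreflexive base_edge.
Proof. by move=> x; have /and4P[_ /negbTE] := base_enum_all base_nbrs_check x. Qed.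

Lemma base_nbrs_uniq x : uniq (base_nbrs x).
Proof. by have /and4P[] := base_enum_all base_nbrs_check x. Qed.

Lemma base_deg x : #|nbhd base_edge x| + (x == base_u) + (x == base_v) = 3.
Proof.
rewrite (card_nbhd_count (base_nbrs_uniq x)) // (eq_in_count (a2 := predT)) ?count_predT //.
by have /and4P[_ _ /eqP] := base_enum_all base_nbrs_check x.
Qed.

Lemma base_ports : (base_u != base_v) && ~~ base_edge base_u base_v.
Proof. by vm_compute. Qed.

Definition base_colour (x : base) : bool :=
  match x with inl (_, a) => (val a < 3) || (a == port_t) | inr c => ~~ odd c end.

Lemma base_colour_check :
  (base_colour base_u != base_colour base_v) &&
  all (fun x => all (fun y => base_colour x != base_colour y) (base_nbrs x)) base_enum.
Proof. by vm_compute. Qed.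

Lemma base_bipartite_colouring :
  [/\ forall x y, base_edge x y ->
        (x \in [set x | base_colour x]) != (y \in [set x | base_colour x])
    & (base_u \in [set x | base_colour x]) != (base_v \in [set x | base_colour x])].
Proof.
have /andP[uv /base_enum_all col] := base_colour_check.
by split=> [x y /(allP (col x))|]; rewrite !inE.
Qed.

Definition base_nbrs_minus (z x : base) : seq base :=
  if x == z then [::] else [seq y <- base_nbrs x | y != z].

Lemma base_bfs_check : all (fun x => x \in bfs base_nbrs 60 [:: base_u] [:: base_u]) base_enum.
Proof. by vm_compute. Qed.

(* The two searches are passed as arguments so that [vm_compute] runs them once per [z]. *)
Definition reach_ports (z : base) (Ru Rv : seq base) : bool :=
  all (fun x => [|| x == z, (z != base_u) && (x \in Ru) | (z != base_v) && (x \in Rv)])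
      base_enum.

Lemma base_minus_bfs_check :
  all (fun z => reach_ports z (bfs (base_nbrs_minus z) 60 [:: base_u] [:: base_u])
                              (bfs (base_nbrs_minus z) 60 [:: base_v] [:: base_v])) base_enum.
Proof. by vm_compute. Qed.

Lemma base_connected : connected base_edge.
Proof.
have from_u x : connect base_edge base_u x.
  apply: bfs_connect (base_enum_all base_bfs_check x) => // y;
  by rewrite inE => /eqP->; apply: connect0.
move=> x y; apply: connect_trans (from_u y).
by rewrite (sym_connect_sym base_edge_sym) from_u.
Qed.

Lemma base_reach_port z x : x != z ->
  (z != base_u /\ connect (del_vertex base_edge z) x base_u) \/
  (z != base_v /\ connect (del_vertex base_edge z) x base_v).
Proof.
move=> xz; have /allP/(_ x (mem_base_enum x)) := base_enum_all base_minus_bfs_check z.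
have minus_sym := sym_connect_sym (del_vertex_sym z base_edge_sym).
have from r y : y \in bfs (base_nbrs_minus z) 60 [:: r] [:: r] ->
    connect (del_vertex base_edge z) y r.
  rewrite minus_sym; apply: bfs_connect => [a b | b | b]; last 2 first.
  - by rewrite inE => /eqP->; apply: connect0.
  - by rewrite inE => /eqP->; apply: connect0.
  rewrite /base_nbrs_minus; case: (a =P z) => // /eqP az; rewrite mem_filter.
  by case/andP => bz ab; rewrite /del_vertex /base_edge /= ab az bz.
rewrite (negbTE xz) orFb => /orP[/andP[zu /from ?] | /andP[zv /from ?]]; [left | right]; by split.
Qed.

(** * The base graph has no Λ-factor away from its free ports *)

(* Connectors x and y with outer edges [ox] and [oy], joined to two parallel gadgets through
   port edges [s1], [s2] (at x) and [t1], [t2] (at y), as constrained by [gadget_ports]. *)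
Lemma parallel_gadgets (ox oy s1 s2 t1 t2 : bool) (dx dy : nat) :
  dx = ox + s1 + s2 -> dy = t1 + t2 + oy -> (dx == 1) || (dx == 2) -> (dy == 1) || (dy == 2) ->
  s1 || t1 -> s2 || t2 -> (s1 -> dx = 1 + t1) -> (s2 -> dx = 1 + t2) ->
  (t1 -> dy = 1 + s1) -> (t2 -> dy = 1 + s2) -> ~~ ox && ~~ oy.
Proof. by move=> -> ->; case: ox oy s1 s2 t1 t2 => [] [] [] [] [] [] //= *; lia. Qed.

Definition base_inner : {pred base} := [pred x | (x != base_u) && (x != base_v)].

Section BaseObstruction.

Variable F : rel base.
Hypotheses (F_sym : symmetric F) (F_sub : subrel F base_edge).
Hypothesis F_deg : lambda_degrees F base_inner.

Local Notation d x := #|nbhd F x|.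

Lemma inner_gadget_vertex j a : 0 < j < 6 -> gadget_vertex j a \in base_inner.
Proof.
move=> j_range; rewrite !inE /base_u /base_v /gadget_vertex; apply/andP.
by split; apply/eqP => -[]; lia.
Qed.

Lemma inner_connector c : connector c \in base_inner.
Proof. by []. Qed.

Lemma gadget_ports j cs ct : 0 < j < 6 -> cs = 2 * (j %/ 3) -> ct = 2 * ((j - 1) %/ 3) + 1 ->
  let es := F (gadget_vertex j port_s) (connector cs) in
  let et := F (gadget_vertex j port_t) (connector ct) in
  [/\ es || et, es -> d (connector cs) = 1 + et & et -> d (connector ct) = 1 + es].
Proof.
move=> j_range -> -> es et; pose f a b := F (gadget_vertex j a) (gadget_vertex j b).
have [j_pos j_lt6] : 0 < j /\ j < 6 by lia.
have degE a : d (gadget_vertex j a) = gadget_deg f es et a.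
  rewrite (card_nbhd_count (base_nbrs_uniq (gadget_vertex j a))); last exact: F_sub.
  rewrite /= count_cat count_map /gadget_deg -addnA; congr (_ + _).
  rewrite /port_connectors ord_modK ?(ltnW j_lt6) // /s_connector /t_connector j_pos j_lt6.
  by case: (a =P port_s) => [->|_]; last case: (a =P port_t) => [->|_]; rewrite /= ?addn0.
have f_sym : symmetric f by move=> a b; rewrite /f F_sym.
have inner a := inner_gadget_vertex a j_range.
have [a|a b fab|used s_deg t_deg] := gadget_port_degrees (es := es) (et := et) f_sym.
- by rewrite -degE; case: (F_deg (inner a)).
- by rewrite -!degE; apply: (F_deg (inner a)).2 (inner b) fab.
split=> // [es_true | et_true].
- have := (F_deg (inner port_s)).2 _ (inner_connector _) es_true.
  by rewrite degE s_deg //; lia.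
- have := (F_deg (inner port_t)).2 _ (inner_connector _) et_true.
  by rewrite degE t_deg //; lia.
Qed.

Lemma connector_deg c : c < 4 -> d (connector c) =
  F (connector c) (gadget_vertex (first_gadget c) (connector_port c))
  + F (connector c) (gadget_vertex (first_gadget c + 1) (connector_port c))
  + F (connector c) (gadget_vertex (first_gadget c + 2) (connector_port c)).
Proof.
move=> c_lt4; rewrite (card_nbhd_count (base_nbrs_uniq (connector c))); last exact: F_sub.
by rewrite /= modn_small // addn0 addnA.
Qed.

Lemma block_outer_edges m : m < 2 ->
  F (gadget_vertex (3 * m) port_s) (connector (2 * m)) = false /\
  F (gadget_vertex (3 * m + 3) port_t) (connector (2 * m + 1)) = false.
Proof.
move=> m_lt2.
have [used1 s1 t1] := gadget_ports (j := 3 * m + 1) (cs := 2 * m) (ct := 2 * m + 1)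
  ltac:(lia) ltac:(lia) ltac:(lia).
have [used2 s2 t2] := gadget_ports (j := 3 * m + 2) (cs := 2 * m) (ct := 2 * m + 1)
  ltac:(lia) ltac:(lia) ltac:(lia).
have dx := connector_deg (c := 2 * m) ltac:(lia).
have dy := connector_deg (c := 2 * m + 1) ltac:(lia).
rewrite first_gadget_even connector_port_even in dx.
rewrite first_gadget_odd connector_port_odd -!(addnA (3 * m)) in dy.
rewrite !(F_sym (connector _)) in dx dy.
have [dx12 _] := F_deg (inner_connector (2 * m)).
have [dy12 _] := F_deg (inner_connector (2 * m + 1)).
have /andP[ox oy] := parallel_gadgets dx dy dx12 dy12 used1 used2 s1 s2 t1 t2.
by split; apply/negbTE.
Qed.

Lemma base_no_lambda_degrees : False.
Proof.
have s_out : F (gadget_vertex 3 port_s) (connector 2) = false :=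
  (block_outer_edges (m := 1) isT).1.
have t_out : F (gadget_vertex 3 port_t) (connector 1) = false :=
  (block_outer_edges (m := 0) isT).2.
have [] := gadget_ports (j := 3) (cs := 2) (ct := 1) isT erefl erefl.
by rewrite s_out t_out.
Qed.

End BaseObstruction.

Theorem mainTheorem2 :
  exists (V : nat -> finType) (E : forall k, rel (V k)),
    (forall k,
       [/\ simple_graph (E k), two_connected (E k), cubic (E k),
           bipartite (E k) & #|V k| %% 6 = 0] /\
       ~ has_Lambda_factor (E k)) /\
    (forall k l, k <> l -> ~ isomorphic (E k) (E l)).
Proof.
have card_V k : #|{: 'I_k.+1 * base}| = k.+1 * 60.
  by rewrite card_prod card_sum !card_prod !card_ord.
have [uv nuv] := andP base_ports.
have [col_edge col_uv] := base_bipartite_colouring.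
exists (fun k => Finite.clone ('I_k.+1 * base)%type _), (necklace base_edge base_u base_v).
split=> [k | k l kl [f [f_bij _]]]; last first.
  by apply: kl; have := bij_eq_card f_bij; rewrite !card_V; lia.
split; last exact: necklace_no_Lambda_factor base_edge_sym base_edge_irr uv base_no_lambda_degrees.
split.
- by split; [apply: necklace_sym base_edge_sym | apply: necklace_irr base_edge_irr uv].
- apply: necklace_two_connected base_edge_sym uv base_connected base_reach_port _.
  by rewrite card_sum !card_prod !card_ord.
- exact: necklace_cubic base_edge_sym uv nuv base_deg.
- exact: necklace_bipartite k _ col_edge col_uv.
- by rewrite card_V; lia.
Qed.
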